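(* Let $\mathcal{S}$ be a semifilter. Then the subspace $(2^\omega\times 2^\omega)\setminus\big(\mathsf{Fin}\times(2^\omega\setminus\mathcal{S})\big)$ of $2^\omega\times2^\omega$ is homeomorphic to a semifilter.
   Context: $\mathsf{Fin}=\{x\subseteq\omega: x\text{ finite}\}$. A semifilter (on $\omega$) is a collection $\mathcal{S}\subseteq\mathcal{P}(\omega)$ such that $\varnothing\notin\mathcal{S}$, $\omega\in\mathcal{S}$, $\mathcal{S}$ is closed under finite modifications (if $x\in\mathcal{S}$ and $y\subseteq\omega$ with $(x\setminus y)\cup(y\setminus x)$ finite then $y\in\mathcal{S}$), and $\mathcal{S}$ is upward-closed. Subsets of $\mathcal{P}(\omega)$ are identified via characteristic functions with subspaces of $2^\omega$. *)

(* The Cantor space 2^omega is represented as nat -> bool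
   (characteristic functions of subsets of omega); subsets of a space are
   predicates. The (product) topology of 2^omega and 2^omega x 2^omega is
   given by its standard basic clopen neighbourhoods: two points are
   "m-close" when they agree on the first m coordinates (in each component). *)
From Stdlib Require Import Arith.

Definition cantor := nat -> bool.

Definition agree (m : nat) (x y : cantor) : Prop :=
  forall i, i < m -> x i = y i.

Definition agree2 (m : nat) (p q : cantor * cantor) : Prop :=
  agree m (fst p) (fst q) /\ agree m (snd p) (snd q).

Definition cont_on {T U : Type} (agT : nat -> T -> T -> Prop)
    (agU : nat -> U -> U -> Prop) (X : T -> Prop) (f : T -> U) : Prop :=
  forall x, X x -> forall n, exists m, forall y, X y -> agT m x y ->
    agU n (f x) (f y).

Definition homeomorphic {T U : Type} (agT : nat -> T -> T -> Prop)
    (agU : nat -> U -> U -> Prop) (X : T -> Prop) (Y : U -> Prop) : Prop :=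
  exists (f : T -> U) (g : U -> T),
    (forall x, X x -> Y (f x)) /\ (forall y, Y y -> X (g y)) /\
    (forall x, X x -> g (f x) = x) /\ (forall y, Y y -> f (g y) = y) /\
    cont_on agT agU X f /\ cont_on agU agT Y g.

Definition Fin (x : cantor) : Prop := exists N, forall i, N <= i -> x i = false.

Definition fin_mod (x y : cantor) : Prop := exists N, forall i, N <= i -> x i = y i.

Definition subset (x y : cantor) : Prop := forall i, x i = true -> y i = true.

Definition semifilter (S : cantor -> Prop) : Prop :=
  ~ S (fun _ => false) /\
  S (fun _ => true) /\
  (forall x y, S x -> fin_mod x y -> S y) /\
  (forall x y, S x -> subset x y -> S y).

(* Interleaving x, y into the single set {2i | i in x} u {2i+1 | i in y} is a
   homeomorphism 2^omega x 2^omega -> 2^omega, so the given subspace is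
   homeomorphic to its image {z | Fin (evens z) -> S (odds z)}.  This image is
   a semifilter: it misses the empty set because S does, contains omega because
   S does, and is closed under finite modifications and supersets because Fin
   is closed under finite modifications and subsets while S is closed under
   finite modifications and supersets. *)
From Stdlib Require Import Arith Lia FunctionalExtensionality.

Definition evens (z : cantor) : cantor := fun i => z (2 * i).
Definition odds (z : cantor) : cantor := fun i => z (2 * i + 1).
Definition interleave (p : cantor * cantor) : cantor :=
  fun n => if Nat.even n then fst p (Nat.div2 n) else snd p (Nat.div2 n).
Definition deinterleave (z : cantor) : cantor * cantor := (evens z, odds z).

Lemma div2_double_add1 (i : nat) : Nat.div2 (2 * i + 1) = i.
Proof. rewrite Nat.add_1_r. apply Nat.div2_succ_double. Qed.

Lemma deinterleaveK (p : cantor * cantor) : deinterleave (interleave p) = p.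
Proof.
  destruct p as [x y]. unfold deinterleave, evens, odds, interleave.
  f_equal; extensionality i; cbn [fst snd].
  - now rewrite Nat.even_even, Nat.div2_double.
  - now rewrite Nat.even_odd, div2_double_add1.
Qed.

Lemma interleaveK (z : cantor) : interleave (deinterleave z) = z.
Proof.
  extensionality n. unfold interleave, deinterleave, evens, odds; simpl.
  pose proof (Nat.div2_odd n) as Hn.
  rewrite <- Nat.negb_odd. destruct (Nat.odd n); simpl in *; f_equal; lia.
Qed.

Lemma agree_interleave (n : nat) (p q : cantor * cantor) :
  agree2 n p q -> agree n (interleave p) (interleave q).
Proof.
  intros [Hx Hy] i Hi. unfold interleave.
  pose proof (Nat.le_div2_diag_l i).
  destruct (Nat.even i); [apply Hx | apply Hy]; lia.
Qed.

Lemma agree_deinterleave (n : nat) (z w : cantor) :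
  agree (2 * n) z w -> agree2 n (deinterleave z) (deinterleave w).
Proof. intros H; split; intros i Hi; apply H; lia. Qed.

Lemma cont_on_all {T U : Type} (agT : nat -> T -> T -> Prop)
    (agU : nat -> U -> U -> Prop) (f : T -> U) (modulus : nat -> nat) :
  (forall n x y, agT (modulus n) x y -> agU n (f x) (f y)) ->
  forall X : T -> Prop, cont_on agT agU X f.
Proof. intros Hf X x _ n. exists (modulus n). intros y _. apply Hf. Qed.

Lemma homeomorphic_preimage {T U : Type} (agT : nat -> T -> T -> Prop)
    (agU : nat -> U -> U -> Prop) (f : T -> U) (g : U -> T) (X : T -> Prop) :
  (forall x, g (f x) = x) -> (forall y, f (g y) = y) ->
  cont_on agT agU X f -> cont_on agU agT (fun y => X (g y)) g ->
  homeomorphic agT agU X (fun y => X (g y)).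
Proof.
  intros gK fK Hf Hg. exists f, g.
  repeat split; auto.
  intros x Hx. now rewrite gK.
Qed.

Lemma Fin_fin_mod (x y : cantor) : Fin x -> fin_mod y x -> Fin y.
Proof.
  intros [M HM] [N HN]. exists (M + N). intros i Hi.
  rewrite HN by lia. apply HM. lia.
Qed.

Lemma Fin_subset (x y : cantor) : Fin y -> subset x y -> Fin x.
Proof.
  intros [M HM] Hxy. exists M. intros i Hi.
  destruct (x i) eqn:E; [|reflexivity].
  apply Hxy in E. rewrite HM in E by exact Hi. discriminate.
Qed.

Lemma fin_mod_evens (x y : cantor) : fin_mod x y -> fin_mod (evens x) (evens y).
Proof. intros [N HN]. exists N. intros i Hi. apply HN. lia. Qed.

Lemma fin_mod_odds (x y : cantor) : fin_mod x y -> fin_mod (odds x) (odds y).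
Proof. intros [N HN]. exists N. intros i Hi. apply HN. lia. Qed.

Lemma semifilter_deinterleave (S : cantor -> Prop) : semifilter S ->
  semifilter (fun z => ~ (Fin (evens z) /\ ~ S (odds z))).
Proof.
  intros [S_empty [S_full [S_fin_mod S_subset]]].
  repeat split.
  - intros H. apply H. split; [now exists 0 | exact S_empty].
  - intros [_ H]. exact (H S_full).
  - intros x y Hx Hxy [Fy nSy]. apply Hx. split.
    + exact (Fin_fin_mod _ _ Fy (fin_mod_evens _ _ Hxy)).
    + intros Sx. exact (nSy (S_fin_mod _ _ Sx (fin_mod_odds _ _ Hxy))).
  - intros x y Hx Hxy [Fy nSy]. apply Hx. split.
    + apply (Fin_subset _ _ Fy). intros i. apply Hxy.
    + intros Sx. apply nSy. apply (S_subset _ _ Sx). intros i. apply Hxy.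
Qed.

Theorem lemma8p3 (S : cantor -> Prop) (hS : semifilter S) :
  exists S' : cantor -> Prop, semifilter S' /\
    homeomorphic agree2 agree
      (fun p : cantor * cantor => ~ (Fin (fst p) /\ ~ S (snd p)))
      S'.
Proof.
  exists (fun z => ~ (Fin (evens z) /\ ~ S (odds z))).
  split; [exact (semifilter_deinterleave S hS)|].
  apply (homeomorphic_preimage _ _ interleave deinterleave).
  - exact deinterleaveK.
  - exact interleaveK.
  - exact (cont_on_all _ _ _ (fun n => n) agree_interleave _).
  - exact (cont_on_all _ _ _ (fun n => 2 * n) agree_deinterleave _).
Qed.
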